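(* Let $\phi(\vec{x})$ be a conjunctive query over a signature $\tau$, $\mathcal{A}$ a $\tau$-structure, $\vec{a}$ a tuple of elements of $A$ with $|\vec{a}|=|\vec{x}|$, and $\mathbb{G}$ a finite set of guarded sets of $\mathcal{A}$ such that every element of $\vec{a}$ belongs to some $X\in\mathbb{G}$. Let $\{\mathcal{A}_X:X\subseteq A\}$ be a family as defined below. If $\bigcup_{X\in\mathbb{G}}\mathcal{A}_X\models\phi[\vec{a}]$ then $\mathcal{A}\models\phi[\vec{a}]$.
   Context: A conjunctive query (CQ) is a formula $\exists\vec{y}\,\vartheta(\vec{x},\vec{y})$ with $\vartheta$ a conjunction of relational atoms. Signatures are relational (constant and relation symbols). $\{\mathcal{A}_X:X\subseteq A\}$ is a family of $\tau$-structures such that for each $X\subseteq A$ there is an isomorphism $p_X:\mathcal{A}\to\mathcal{A}_X$ with $p_X(a)=a$ for all $a\in X$, and $A_X\cap A_Y=X\cap Y$ for all $X,Y\subseteq A$ ($A_X$ the domain of $\mathcal{A}_X$). A guarded set of $\mathcal{A}$ is a finite $X\subseteq A$ containing the interpretations of all constant symbols. The union of structures with the same constant interpretations has as domain the union of domains and as relations the unions of relations. *)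

From HB Require Import structures.
From mathcomp Require Import all_boot.
From mathcomp Require Import boolp classical_sets cardinality.

Set Implicit Arguments.
Unset Strict Implicit.
Unset Printing Implicit Defensive.

Local Open Scope classical_set_scope.

Record signature := Signature {
  const_sym : Type;
  rel_sym : Type;
  arity : rel_sym -> nat }.

(* Propositional "for all / exists member of a list" (no eqType needed). *)
Fixpoint all_in (T : Type) (P : T -> Prop) (s : seq T) : Prop :=
  match s with nil => True | x :: s' => P x /\ all_in P s' end.
Fixpoint some_in (T : Type) (P : T -> Prop) (s : seq T) : Prop :=
  match s with nil => False | x :: s' => P x \/ some_in P s' end.

(* tau-structures whose domain is a subset of a common universe U
   (needed to speak of A_X \cap A_Y and of unions of structures). *)
Record structure (tau : signature) (U : Type) := Structure {
  dom : set U;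
  cst : const_sym tau -> U;
  rel : rel_sym tau -> seq U -> Prop }.

Definition wf_structure tau U (S : structure tau U) : Prop :=
  (forall c, dom S (cst S c)) /\
  (forall r t, rel S r t -> size t = arity r /\ all_in (dom S) t).

Definition is_iso tau U (A B : structure tau U) (p : U -> U) : Prop :=
  (forall u, dom A u -> dom B (p u)) /\
  (forall u v, dom A u -> dom A v -> p u = p v -> u = v) /\
  (forall w, dom B w -> exists u, dom A u /\ p u = w) /\
  (forall c, p (cst A c) = cst B c) /\
  (forall r t, all_in (dom A) t -> (rel A r t <-> rel B r (map p t))) /\
  (forall r t, rel B r t -> all_in (dom B) t).

(* Conjunctive queries  exists y_0..y_{ny-1}, /\ atoms,
   with free variables x_0..x_{nx-1}. Terms: free var, bound var, constant. *)
Inductive term (tau : signature) (nx ny : nat) :=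
| TX of 'I_nx
| TY of 'I_ny
| TC of const_sym tau.

Definition atom tau nx ny := (rel_sym tau * seq (term tau nx ny))%type.

Record cq (tau : signature) (nx ny : nat) := CQ { atoms : seq (atom tau nx ny) }.

Definition eval_term tau U nx ny (S : structure tau U)
  (a : 'I_nx -> U) (b : 'I_ny -> U) (t : term tau nx ny) : U :=
  match t with TX i => a i | TY j => b j | TC c => cst S c end.

Definition sat tau U nx ny (S : structure tau U) (phi : cq tau nx ny)
  (a : 'I_nx -> U) : Prop :=
  exists b : 'I_ny -> U, (forall j, dom S (b j)) /\
    all_in (fun at_ : atom tau nx ny =>
            rel S at_.1 (map (eval_term S a b) at_.2)) (atoms phi).

Definition guarded tau U (A : structure tau U) (X : set U) : Prop :=
  finite_set X /\ X `<=` dom A /\ (forall c, X (cst A c)).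

Definition good_family tau U (A : structure tau U)
  (fam : set U -> structure tau U) (p : set U -> U -> U) : Prop :=
  (forall X, X `<=` dom A ->
     wf_structure (fam X) /\ is_iso A (fam X) (p X) /\
     (forall u, X u -> p X u = u)) /\
  (forall X Y, X `<=` dom A -> Y `<=` dom A -> X <> Y ->
     dom (fam X) `&` dom (fam Y) = X `&` Y).

(* Union of the structures A_X, X in G (they share the constant
   interpretations of A, since guarded sets contain the constants). *)
Definition union_struct tau U (A : structure tau U)
  (fam : set U -> structure tau U) (G : seq (set U)) : structure tau U :=
  {| dom := fun u => some_in (fun X => dom (fam X) u) G;
     cst := cst A;
     rel := fun r t => some_in (fun X => rel (fam X) r t) G |}.

(** Inverting the isomorphisms p_X glues into a single map h from the union
    of the A_X back to A: any point common to A_X and A_Y lies in X ∩ Y, where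
    p_X and p_Y are both the identity, so the inverses agree. This h is a
    homomorphism fixing every element of every X in G, hence the constants and
    the tuple a, and conjunctive queries are preserved by such homomorphisms. *)

From mathcomp Require Import all_boot.
From mathcomp Require Import boolp classical_sets.
From Stdlib Require List.

Set Implicit Arguments.
Unset Strict Implicit.
Unset Printing Implicit Defensive.

Local Open Scope classical_set_scope.

Lemma some_inP (T : Type) (P : T -> Prop) (s : seq T) :
  some_in P s <-> exists2 x, List.In x s & P x.
Proof.
elim: s => [|x s IH] /=; first by split=> // -[].
split=> [[Px | /IH[y sy Py]] | [y [<- | sy] Py]]; by [exists x; first left
  | exists y; first right | left | right; apply/IH; exists y].
Qed.

Lemma all_inP (T : Type) (P : T -> Prop) (s : seq T) :
  all_in P s <-> forall x, List.In x s -> P x.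
Proof.
elim: s => [|x s IH] //=; split=> [[Px /IH Ps] y [<- | /Ps] // | Ps].
by split; [apply: Ps; left | apply/IH => y sy; apply: Ps; right].
Qed.

Lemma all_in_impl (T : Type) (P Q : T -> Prop) (s : seq T) :
  (forall x, P x -> Q x) -> all_in P s -> all_in Q s.
Proof. by move=> PQ; elim: s => //= x s IH [/PQ Qx /IH]. Qed.

Lemma all_in_map (T T' : Type) (P : T' -> Prop) (f : T -> T') (s : seq T) :
  all_in P (map f s) <-> all_in (P \o f) s.
Proof. by elim: s => //= x s ->. Qed.

Lemma map_id_in (T : Type) (P : T -> Prop) (f : T -> T) (s : seq T) :
  (forall x, P x -> f x = x) -> all_in P s -> map f s = s.
Proof. by move=> fP; elim: s => //= x s IH [/fP -> /IH ->]. Qed.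

Definition is_hom tau U (S T : structure tau U) (h : U -> U) : Prop :=
  [/\ forall u, dom S u -> dom T (h u),
      forall c, h (cst S c) = cst T c &
      forall r t, rel S r t -> rel T r (map h t)].

Section Homomorphism.

Variables (tau : signature) (U : Type) (S T : structure tau U) (h : U -> U).
Hypothesis h_hom : is_hom S T h.

Lemma eval_term_hom nx ny (a : 'I_nx -> U) (b : 'I_ny -> U)
    (t : term tau nx ny) :
  eval_term T (h \o a) (h \o b) t = h (eval_term S a b t).
Proof. by case: h_hom => _ hcst _; case: t => //= c; rewrite hcst. Qed.

Lemma sat_hom nx ny (phi : cq tau nx ny) (a : 'I_nx -> U) :
  sat S phi a -> sat T phi (h \o a).
Proof.
case: h_hom => hdom _ hrel [b [Sb Sphi]]; exists (h \o b); split=> [j|].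
  exact: hdom.
apply: all_in_impl Sphi => -[r ts] /= /hrel.
by rewrite -map_comp (eq_map (eval_term_hom a b)).
Qed.

End Homomorphism.

Section Gluing.

Variables (tau : signature) (U : Type) (A : structure tau U).
Variables (fam : set U -> structure tau U) (p : set U -> U -> U).
Hypothesis family : good_family A fam p.

Lemma good_family_glue (X Y : set U) (u v : U) :
  X `<=` dom A -> Y `<=` dom A -> dom A u -> dom A v -> p X u = p Y v -> u = v.
Proof.
case: family => iso meet XA YA Au Av puv.
have [_ [[pXdom [pXinj _]] pXid]] := iso X XA.
have [_ [[pYdom [pYinj _]] pYid]] := iso Y YA.
have [eXY | XY] := pselect (X = Y); first by rewrite eXY in puv; exact: pYinj.
have : (dom (fam X) `&` dom (fam Y)) (p X u).
  by split; [exact: pXdom | rewrite puv; exact: pYdom].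
rewrite meet // => -[Xw Yw].
have pXw := pXid _ Xw; have pYw := pYid _ Yw.
have <- : p X u = u by apply: pXinj; [exact: XA | done | rewrite pXw].
by apply: pYinj; [exact: YA | done | rewrite pYw].
Qed.

Variable G : seq (set U).
Hypothesis G_guarded : all_in (guarded A) G.

Let union := union_struct A fam G.

Lemma guarded_sub_dom (X : set U) : List.In X G -> X `<=` dom A.
Proof. by move=> GX; have [_ []] := (all_inP _ _).1 G_guarded X GX. Qed.

Lemma exists_glued_inverse : exists h : U -> U,
  (forall X u, List.In X G -> dom A u -> h (p X u) = u) /\
  (forall w, ~ dom union w -> h w = w).
Proof.
(* Off the union h is the identity, so that the constants are fixed even
   when G is empty. *)
pose inverse_at w v :=
  (forall X u, List.In X G -> dom A u -> p X u = w -> v = u) /\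
  (~ dom union w -> v = w).
suff [h hP] : {h : U -> U & forall w, inverse_at w (h w)}.
  exists h; split=> [X u GX Au | w]; last exact: (hP w).2.
  exact: (hP _).1 X u GX Au erefl.
apply: (@choice _ _ inverse_at) => w.
have [/some_inP[X GX Xw] | Nw] := pselect (dom union w).
  have XA := guarded_sub_dom GX.
  have [_ [[_ [_ [pXonto _]]] _]] := family.1 X XA.
  have [v [Av pXv]] := pXonto w Xw.
  exists v; split=> [Y u GY Au pYu | []]; last by apply/some_inP; exists X.
  by apply: good_family_glue XA (guarded_sub_dom GY) Av Au _; rewrite pYu pXv.
exists w; split=> // X u GX Au pXu; exfalso; apply: Nw; apply/some_inP.
have [_ [[pXdom _] _]] := family.1 X (guarded_sub_dom GX).
by exists X => //; rewrite -pXu; apply: pXdom.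
Qed.

Variable h : U -> U.
Hypothesis h_inv : forall X u, List.In X G -> dom A u -> h (p X u) = u.
Hypothesis h_id_out : forall w, ~ dom union w -> h w = w.

Lemma glued_inverse_dom (X : set U) (w : U) :
  List.In X G -> dom (fam X) w -> dom A (h w) /\ p X (h w) = w.
Proof.
move=> GX Xw.
have [_ [[_ [_ [pXonto _]]] _]] := family.1 X (guarded_sub_dom GX).
by have [u [Au <-]] := pXonto w Xw; rewrite h_inv.
Qed.

Lemma glued_inverse_fix (X : set U) (u : U) : List.In X G -> X u -> h u = u.
Proof.
move=> GX Xu; have [_ [_ pXid]] := family.1 X (guarded_sub_dom GX).
by rewrite -{1}(pXid u Xu) h_inv //; apply: guarded_sub_dom GX u Xu.
Qed.

Lemma glued_inverse_hom : is_hom union A h.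
Proof.
split=> [w /some_inP[X GX Xw] | c | r t /some_inP[X GX Xrt]].
- exact: (glued_inverse_dom GX Xw).1.
- have [/some_inP[X GX _] | /h_id_out //] := pselect (dom union (cst A c)).
  apply: (glued_inverse_fix GX).
  by have [_ [_ Xcst]] := (all_inP _ _).1 G_guarded X GX; apply: Xcst.
have [_ [[_ [_ [_ [_ [pXrel pXrng]]]]] _]] := family.1 X (guarded_sub_dom GX).
have Xt := pXrng r t Xrt.
have At : all_in (dom A) (map h t).
  by apply/all_in_map; apply: all_in_impl Xt => w /(glued_inverse_dom GX) [].
apply/(pXrel r _ At); rewrite -map_comp (map_id_in _ Xt) // => w Xw.
exact: (glued_inverse_dom GX Xw).2.
Qed.

End Gluing.

Theorem lemma3 (tau : signature) (U : Type) (nx ny : nat)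
  (phi : cq tau nx ny) (A : structure tau U) (a : 'I_nx -> U)
  (G : seq (set U)) (fam : set U -> structure tau U) (p : set U -> U -> U) :
  wf_structure A ->
  (forall i, dom A (a i)) ->
  all_in (guarded A) G ->
  (forall i, some_in (fun X => X (a i)) G) ->
  good_family A fam p ->
  sat (union_struct A fam G) phi a ->
  sat A phi a.
Proof.
move=> _ _ G_guarded aG family union_sat.
have [h [h_inv h_id_out]] := exists_glued_inverse family G_guarded.
have h_a : h \o a = a.
  apply: funext => i /=; have /some_inP[X GX Xa] := aG i.
  exact: (glued_inverse_fix family G_guarded h_inv GX Xa).
rewrite -h_a; apply: sat_hom union_sat.
exact: (glued_inverse_hom family G_guarded h_inv h_id_out).
Qed.
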